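(* Under the full correlation model $\mathtt{FC}$, given $n$, $m$ and a scoring vector $s$, a vector $k=(k_1,\ldots,k_n)$ of non-negative integers with $\sum_i k_i=m$ maximizing the egalitarian social welfare $SW^e_{\mathtt{FC}}(k)$, and one maximizing the Nash social welfare $SW^n_{\mathtt{FC}}(k)$, can each be computed in $O(nm^2)$ time.
   Context: There are $n$ agents $a_1,\ldots,a_n$ and $m$ items. A preference profile assigns to each agent a strict ranking of the items. A scoring vector is $s=(s_1,\ldots,s_m)$ of non-negative rationals with $s_1\ge\cdots\ge s_m$; an agent's value for her $j$-th preferred item is $s_j$, and utilities are additive. Given $k=(k_1,\ldots,k_n)$ with non-negative integer entries summing to $m$, agent $a_1$ first picks $k_1$ items, then $a_2$ picks $k_2$ of the remaining items, etc., each agent greedily picking her most preferred remaining items. $EU^k_\Psi(a)$ is the expected total score received by $a$ when the profile is drawn from $\Psi$. Social welfare: utilitarian $SW^u_\Psi(k)=\sum_a EU^k_\Psi(a)$, egalitarian $SW^e_\Psi(k)=\min_a EU^k_\Psi(a)$, Nash $SW^n_\Psi(k)=\prod_a EU^k_\Psi(a)$. Model $\mathtt{FC}$ (full correlation): all agents have the same ranking. *)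

From HB Require Import structures.
From mathcomp Require Import all_boot all_order all_fingroup all_algebra.
Set Implicit Arguments. Unset Strict Implicit. Unset Printing Implicit Defensive.
Import Order.TTheory GRing.Theory Num.Theory.
Local Open Scope ring_scope.

(* Items are 'I_m. A ranking is a permutation r : {perm 'I_m} mapping  *)
(* a (0-based) position j to the item ranked j-th. Scores: s : seq rat  *)
(* with s`_j = score of the (j+1)-th preferred item.                    *)
(* A profile assigns a ranking to each agent 'I_n; agents pick in the   *)
(* order a_1, ..., a_n (i.e. 0, ..., n-1).                              *)

Section Picking.
Variables (n m : nat) (prof : 'I_n -> {perm 'I_m}) (k : 'I_n -> nat).

Definition greedy_pick (j : 'I_n) (T : seq 'I_m) : seq 'I_m :=
  take (k j) [seq x <- map (prof j) (enum 'I_m) | x \notin T].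

Fixpoint taken (i : nat) : seq 'I_m :=
  if i is i'.+1 then
    let T := taken i' in
    T ++ (if insub i' is Some j then greedy_pick j T else [::])
  else [::].

Definition bundle (j : 'I_n) : seq 'I_m := greedy_pick j (taken j).

End Picking.

Definition utility (n m : nat) (s : seq rat) (prof : 'I_n -> {perm 'I_m})
    (k : 'I_n -> nat) (j : 'I_n) : rat :=
  \sum_(x <- bundle prof k j) s`_(((prof j)^-1)%g x).

(* Expected utility under FC: all agents share one common ranking,
   drawn uniformly at random among all rankings of the items. *)
Definition EU_FC (n m : nat) (s : seq rat) (k : 'I_n -> nat) (j : 'I_n) : rat :=
  (\sum_(p : {perm 'I_m}) utility s (fun _ => p) k j) / (#|{perm 'I_m}|%:R).

Definition seqmin (l : seq rat) : rat :=
  if l is x :: xs then foldr Num.min x xs else 0.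

Definition SWe_FC (n m : nat) (s : seq rat) (k : 'I_n -> nat) : rat :=
  seqmin [seq EU_FC m s k j | j <- enum 'I_n].

Definition SWn_FC (n m : nat) (s : seq rat) (k : 'I_n -> nat) : rat :=
  \prod_(j < n) EU_FC m s k j.

Definition scoring_vector (m : nat) (s : seq rat) : Prop :=
  size s = m /\ sorted (fun x y => y <= x) s /\ all (fun x => 0 <= x) s.

(* Part 2: machine model for running time: a unit-cost RAM over the    *)
(* rationals (memory cells indexed by nat holding rationals; +, -, *,  *)
(* comparisons, indirect addressing), given as a deep embedding of a   *)
(* small while-language with a cost-annotated big-step semantics.      *)

Definition mem := nat -> rat.

Inductive expr :=
  | ECst of rat
  | ELoad of expr
  | EAdd of expr & expr
  | ESub of expr & expr
  | EMul of expr & expr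
  | ELt of expr & expr
  | ELe of expr & expr
  | EEq of expr & expr.

Definition addr (q : rat) : nat := `|Num.floor q|%N.

Fixpoint eval (M : mem) (e : expr) : rat :=
  match e with
  | ECst q => q
  | ELoad a => M (addr (eval M a))
  | EAdd a b => eval M a + eval M b
  | ESub a b => eval M a - eval M b
  | EMul a b => eval M a * eval M b
  | ELt a b => (if (eval M a < eval M b)%R then 1 else 0)
  | ELe a b => (if (eval M a <= eval M b)%R then 1 else 0)
  | EEq a b => (if (eval M a == eval M b)%R then 1 else 0)
  end.

Fixpoint esize (e : expr) : nat :=
  match e with
  | ECst _ => 1
  | ELoad a => (esize a).+1
  | EAdd a b | ESub a b | EMul a b | ELt a b | ELe a b | EEq a b =>
      (esize a + esize b).+1
  end.

Inductive cmd :=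
  | CSkip
  | CStore of expr & expr          (* M[addr a] := v *)
  | CSeq of cmd & cmd
  | CIf of expr & cmd & cmd        (* test: value <> 0 *)
  | CWhile of expr & cmd.

Definition upd (M : mem) (a : nat) (v : rat) : mem :=
  fun b => if b == a then v else M b.

Inductive exec : cmd -> mem -> nat -> mem -> Prop :=
  | exec_skip M : exec CSkip M 1 M
  | exec_store a v M :
      exec (CStore a v) M (esize a + esize v).+1
        (upd M (addr (eval M a)) (eval M v))
  | exec_seq c1 c2 M t1 M1 t2 M2 :
      exec c1 M t1 M1 -> exec c2 M1 t2 M2 -> exec (CSeq c1 c2) M (t1 + t2) M2
  | exec_if_true b c1 c2 M t M' :
      eval M b != 0 -> exec c1 M t M' -> exec (CIf b c1 c2) M (esize b + t).+1 M'
  | exec_if_false b c1 c2 M t M' :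
      eval M b = 0 -> exec c2 M t M' -> exec (CIf b c1 c2) M (esize b + t).+1 M'
  | exec_while_false b c M :
      eval M b = 0 -> exec (CWhile b c) M (esize b).+1 M
  | exec_while_true b c M t1 M1 t2 M2 :
      eval M b != 0 -> exec c M t1 M1 -> exec (CWhile b c) M1 t2 M2 ->
      exec (CWhile b c) M (esize b + t1 + t2).+1 M2.

Definition input_mem (n m : nat) (s : seq rat) : mem :=
  fun a => if a == 0%N then n%:R
           else if a == 1%N then m%:R
           else if (2 <= a < m.+2)%N then s`_(a - 2) else 0.

Definition outputs (n m : nat) (M : mem) (k : 'I_n -> nat) : Prop :=
  forall i : 'I_n, M (m.+2 + i)%N = (k i)%:R.

Definition computes_opt_in_O_nm2
    (SW : forall n m : nat, seq rat -> ('I_n -> nat) -> rat) (P : cmd) : Prop :=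
  exists C : nat,
  forall (n m : nat) (s : seq rat), (0 < n)%N -> scoring_vector m s ->
  exists (t : nat) (M' : mem),
    exec P (input_mem n m s) t M' /\ (t <= C * (n * m ^ 2 + 1))%N /\
    exists k : 'I_n -> nat,
      outputs m M' k /\ (\sum_(i < n) k i)%N = m /\
      forall k' : 'I_n -> nat, (\sum_(i < n) k' i)%N = m -> SW n m s k' <= SW n m s k.

From Pilot Require Import Defs.
From mathcomp Require Import all_boot all_order all_fingroup all_algebra.
From mathcomp Require Import zify.

Set Implicit Arguments. Unset Strict Implicit. Unset Printing Implicit Defensive.
Import Order.TTheory GRing.Theory Num.Theory.
Local Open Scope ring_scope.

(* Under full correlation all agents share one ranking, so whatever that ranking is, the agents
   take consecutive blocks of it: agent j gets the positions c_j, ..., c_{j+1} - 1, where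
   c_j = k_1 + ... + k_{j-1}, and EU(a_j) = P(c_{j+1}) - P(c_j) with P(t) = s_1 + ... + s_t.
   Both welfares fold the utilities from the left with an operator f (min, resp. product) that
   is monotone in its first argument when the second one is nonnegative. Hence the best value
   V_i(t) of splitting the first t positions among the first i agents satisfies V_1(t) = P(t)
   and V_i(t) = max_(u <= t) f (V_(i-1)(u), P(t) - P(u)), and an optimal k is read off by
   following the maximizing u back from V_n(m). A RAM program fills the table in O(m) steps
   per entry and then backtracks, in O(n m^2) steps overall. *)

(** * Expected utilities under full correlation *)

Definition prefix_score (m : nat) (s : seq rat) (t : nat) : rat :=
  \sum_(x <- take t (iota 0 m)) s`_x.

Lemma prefix_score0 m s : prefix_score m s 0 = 0.
Proof. by rewrite /prefix_score take0 big_nil. Qed.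

Lemma prefix_scoreS m s t : (t < m)%N -> prefix_score m s t.+1 = prefix_score m s t + s`_t.
Proof.
move=> lt_t_m; rewrite /prefix_score (take_nth 0%N) ?size_iota // -cats1 big_cat big_seq1.
by rewrite nth_iota.
Qed.

Lemma prefix_score_mono m s : (forall j, 0 <= s`_j) ->
  {homo prefix_score m s : a b / (a <= b)%N >-> a <= b}.
Proof.
move=> s_ge0 a b le_ab; rewrite /prefix_score -(subnKC le_ab) takeD big_cat /= lerDl.
exact: sumr_ge0.
Qed.

Lemma filter_notin_take (T : eqType) (L : seq T) c : uniq L ->
  [seq x <- L | x \notin take c L] = drop c L.
Proof.
move=> uL; have := uL; rewrite -{1}(cat_take_drop c L) cat_uniq.
case/and3P=> _ disj _; rewrite -[X in filter _ X](cat_take_drop c L) filter_cat.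
rewrite (@eq_in_filter _ _ pred0 (take c L)) => [|x xt]; last exact/negbF.
rewrite filter_pred0 (@eq_in_filter _ _ predT) ?filter_predT // => x xd /=.
by apply/negP=> xt; case/hasP: disj; exists x.
Qed.

Section CommonRanking.
Variables (n m : nat) (p : {perm 'I_m}) (k : 'I_n -> nat).
Let ks := [seq k j | j <- enum 'I_n].

Lemma filter_notin_ranked c :
  [seq x <- map p (enum 'I_m) | x \notin map p (take c (enum 'I_m))] =
  map p (drop c (enum 'I_m)).
Proof.
by rewrite map_take filter_notin_take ?map_drop // map_inj_uniq ?enum_uniq //; apply: perm_inj.
Qed.

Lemma sumn_take_ordS (j : 'I_n) : sumn (take j.+1 ks) = (sumn (take j ks) + k j)%N.
Proof.
have sks : size ks = n by rewrite size_map size_enum_ord.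
by rewrite (take_nth 0%N) ?sks // sumn_rcons (nth_map j) ?size_enum_ord // nth_ord_enum.
Qed.

Lemma taken_common i : (i <= n)%N ->
  taken (fun _ => p) k i = map p (take (sumn (take i ks)) (enum 'I_m)).
Proof.
elim: i => [|i IH] lt_i_n; first by rewrite !take0.
rewrite /= IH 1?ltnW // insubT /greedy_pick filter_notin_ranked.
rewrite (sumn_take_ordS (Ordinal lt_i_n)) takeD map_cat.
by congr (_ ++ _); rewrite map_take.
Qed.

Lemma utility_common (s : seq rat) (j : 'I_n) :
  utility s (fun _ => p) k j =
  prefix_score m s (sumn (take j.+1 ks)) - prefix_score m s (sumn (take j ks)).
Proof.
rewrite /utility /bundle /greedy_pick taken_common 1?ltnW //.
rewrite filter_notin_ranked -map_take big_map.
under eq_bigr do rewrite permK.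
rewrite sumn_take_ordS /prefix_score takeD big_cat /= addrC addrK.
by rewrite -(big_map val predT (fun x => s`_x)) map_take map_drop val_enum_ord.
Qed.
End CommonRanking.

Definition block_values (R : zmodType) (P : nat -> R) (c : seq nat) : seq R :=
  [seq P (sumn (take j.+1 c)) - P (sumn (take j c)) | j <- iota 0 (size c)].

Lemma block_values_rcons (R : zmodType) (P : nat -> R) c x :
  block_values P (rcons c x) = rcons (block_values P c) (P (sumn c + x)%N - P (sumn c)).
Proof.
rewrite /block_values size_rcons -addn1 iotaD add0n map_cat cats1 /=.
rewrite take_oversize ?size_rcons // sumn_rcons -!cats1 take_size_cat //.
congr (_ ++ [:: _]); apply/eq_in_map => j; rewrite mem_iota add0n => /andP[_ lt_j_c].
by rewrite !takel_cat // ltnW.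
Qed.

Lemma EU_FC_block_values n m s (k : 'I_n -> nat) :
  [seq EU_FC m s k j | j <- enum 'I_n] =
  block_values (prefix_score m s) [seq k j | j <- enum 'I_n].
Proof.
rewrite /block_values size_map size_enum_ord -val_enum_ord -map_comp.
apply: eq_map => j /=; rewrite /EU_FC.
under eq_bigr do rewrite utility_common.
rewrite sumr_const card_Sn -[X in X / _]mulr_natr mulfK //.
by rewrite pnatr_eq0 -lt0n fact_gt0.
Qed.

(** * The dynamic program *)

Section DynamicProgram.
Variables (R : realDomainType) (P : nat -> R) (f : R -> R -> R) (agg : seq R -> R).
Hypothesis P0 : P 0%N = 0.
Hypothesis P_mono : {homo P : a b / (a <= b)%N >-> a <= b}.
Hypothesis f_monol : forall x x' y, 0 <= y -> x <= x' -> f x y <= f x' y.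
Hypothesis agg1 : forall y, agg [:: y] = y.
Hypothesis agg_rcons : forall L y, L != [::] -> agg (rcons L y) = f (agg L) y.

Definition best_step (V : nat -> R) (t : nat) (acc : R * nat) (u : nat) : R * nat :=
  let v := f (V u) (P t - P u) in if acc.1 < v then (v, u) else acc.

Definition best_split (V : nat -> R) (t : nat) : R * nat :=
  foldl (best_step V t) (f (V 0%N) (P t - P 0%N), 0%N) (iota 1 t).

Lemma foldl_best_step V t acc us :
  let F u := f (V u) (P t - P u) in
  acc.1 = F acc.2 -> (acc.2 <= t)%N -> all (fun u => u <= t)%N us ->
  let r := foldl (best_step V t) acc us in
  [/\ r.1 = F r.2, (r.2 <= t)%N, acc.1 <= r.1 & forall u, u \in us -> F u <= r.1].
Proof.
move=> F; elim: us acc => [|u us IH] [b a] /= Fa le_a_t; first by split.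
case/andP=> le_u_t le_us_t; rewrite /best_step /=; case: ifP => [b_lt|b_nlt].
  have [r1 r2 r3 r4] := IH (F u, u) erefl le_u_t le_us_t.
  split=> //; first exact: le_trans (ltW b_lt) r3.
  by move=> v; rewrite inE => /orP[/eqP -> //|]; apply: r4.
have [r1 r2 r3 r4] := IH (b, a) Fa le_a_t le_us_t.
split=> // v; rewrite inE => /orP[/eqP ->|]; last exact: r4.
by apply: le_trans r3; rewrite /F /= leNgt b_nlt.
Qed.

Lemma best_splitP V t :
  let r := best_split V t in
  [/\ r.1 = f (V r.2) (P t - P r.2), (r.2 <= t)%N &
      forall u, (u <= t)%N -> f (V u) (P t - P u) <= r.1].
Proof.
have le_iota_t : all (fun u => u <= t)%N (iota 1 t).
  by apply/allP => u; rewrite mem_iota; lia.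
have [r1 r2 r3 r4] :=
  foldl_best_step (acc := (f (V 0%N) (P t - P 0%N), 0%N)) erefl (leq0n t) le_iota_t.
split=> // -[|u] le_u_t //; apply: r4; rewrite mem_iota; lia.
Qed.

Fixpoint dp_value (i : nat) : nat -> R :=
  match i with
  | 0 => fun _ => 0
  | 1 => P
  | i'.+1 => fun t => (best_split (dp_value i') t).1
  end.

Definition dp_arg (i t : nat) : nat := (best_split (dp_value i.-1) t).2.

Fixpoint dp_split (i t : nat) : seq nat :=
  match i with
  | 0 => [::]
  | 1 => [:: t]
  | i'.+1 => rcons (dp_split i' (dp_arg i t)) (t - dp_arg i t)%N
  end.

Lemma dp_value_best i t : (2 <= i)%N ->
  dp_value i t = (best_split (dp_value i.-1) t).1.
Proof. by case: i => [|[]]. Qed.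

Lemma dp_arg_le i t : (dp_arg i t <= t)%N.
Proof. by case: (best_splitP (dp_value i.-1) t). Qed.

Lemma dp_split_rcons i t : (2 <= i)%N ->
  dp_split i t = rcons (dp_split i.-1 (dp_arg i t)) (t - dp_arg i t)%N.
Proof. by case: i => [|[]]. Qed.

Lemma agg_block_values_le_dp_value c :
  c != [::] -> agg (block_values P c) <= dp_value (size c) (sumn c).
Proof.
elim/last_ind: c => [//|c x IH] _.
rewrite block_values_rcons size_rcons sumn_rcons.
case: c IH => [|y c] IH; first by rewrite /= agg1 P0 subr0.
rewrite agg_rcons // dp_value_best //=.
have [_ _ best_ge] := best_splitP (dp_value (size c).+1) (sumn (y :: c) + x).
apply: le_trans (best_ge _ (leq_addr _ _)); apply: f_monol; last exact: IH.
by rewrite subr_ge0 P_mono // leq_addr.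
Qed.

Lemma dp_splitP i t : (0 < i)%N -> [/\ size (dp_split i t) = i,
  sumn (dp_split i t) = t & agg (block_values P (dp_split i t)) = dp_value i t].
Proof.
elim: i t => [//|[|i] IH] t _; first by rewrite /block_values /= agg1 addn0 P0 subr0.
have [size_s sumn_s agg_s] := IH (dp_arg i.+2 t) isT.
have [best_eq le_arg_t _] := best_splitP (dp_value i.+1) t.
rewrite dp_split_rcons // size_rcons sumn_rcons size_s sumn_s subnKC //.
rewrite block_values_rcons sumn_s subnKC // agg_rcons -?size_eq0 ?size_map ?size_iota ?size_s //.
by split=> //; rewrite agg_s [RHS]dp_value_best // best_eq.
Qed.
End DynamicProgram.

(** * A logic of total correctness with running time *)

Definition runs (c : cmd) (M : Defs.mem) (Q : Defs.mem -> Prop) (T : nat) : Prop :=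
  exists t M', [/\ exec c M t M', (t <= T)%N & Q M'].

Lemma runs_weaken c M (Q Q' : Defs.mem -> Prop) T T' :
  runs c M Q T -> (T <= T')%N -> (forall M', Q M' -> Q' M') -> runs c M Q' T'.
Proof. by case=> t [M' [ex le_t QM']] le_T QQ'; exists t, M'; split; [|lia|apply: QQ']. Qed.

Lemma runs_le c M Q T T' : runs c M Q T -> (T <= T')%N -> runs c M Q T'.
Proof. by move=> r le_T; apply: runs_weaken r le_T _. Qed.

Lemma runs_skip M (Q : Defs.mem -> Prop) : Q M -> runs CSkip M Q 1.
Proof. by exists 1%N, M; split=> //; apply: exec_skip. Qed.

Lemma runs_store a v M (Q : Defs.mem -> Prop) :
  Q (upd M (addr (eval M a)) (eval M v)) -> runs (CStore a v) M Q (esize a + esize v).+1.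
Proof. by move=> QM'; exists (esize a + esize v).+1; eexists; split; [apply: exec_store| |]. Qed.

Lemma runs_seq c1 c2 M Q1 Q2 T1 T2 :
  runs c1 M Q1 T1 -> (forall M1, Q1 M1 -> runs c2 M1 Q2 T2) ->
  runs (CSeq c1 c2) M Q2 (T1 + T2).
Proof.
case=> t1 [M1 [ex1 le1 Q1M1]] /(_ M1 Q1M1) [t2 [M2 [ex2 le2 Q2M2]]].
by exists (t1 + t2)%N, M2; split; [apply: exec_seq ex1 ex2|lia|].
Qed.

Lemma runs_store_seq a v c M Q T :
  runs c (upd M (addr (eval M a)) (eval M v)) Q T ->
  runs (CSeq (CStore a v) c) M Q ((esize a + esize v).+1 + T).
Proof. by move=> r; apply: runs_seq (runs_store (Q := eq _) erefl) _ => _ <-. Qed.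

Lemma runs_if_true b c1 c2 M Q T :
  eval M b != 0 -> runs c1 M Q T -> runs (CIf b c1 c2) M Q (esize b + T).+1.
Proof.
move=> b_true [t [M' [ex le_t QM']]].
by exists (esize b + t).+1, M'; split; [apply: exec_if_true|lia|].
Qed.

Lemma runs_if_false b c1 c2 M Q T :
  eval M b = 0 -> runs c2 M Q T -> runs (CIf b c1 c2) M Q (esize b + T).+1.
Proof.
move=> b_false [t [M' [ex le_t QM']]].
by exists (esize b + t).+1, M'; split; [apply: exec_if_false|lia|].
Qed.

Lemma runs_while b c (Inv : nat -> Defs.mem -> Prop) N T M :
  (forall i M, (i < N)%N -> Inv i M -> eval M b != 0 /\ runs c M (Inv i.+1) T) ->
  (forall M, Inv N M -> eval M b = 0) -> Inv 0%N M ->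
  runs (CWhile b c) M (Inv N) (N * (esize b + T).+1 + (esize b).+1).
Proof.
move=> step stop Inv0.
suff loop d i M' : (i + d)%N = N -> Inv i M' ->
    runs (CWhile b c) M' (Inv N) (d * (esize b + T).+1 + (esize b).+1).
  exact: (loop N 0%N).
elim: d i M' => [|d IH] i M' iN InvM'.
  rewrite addn0 in iN; subst i.
  by exists (esize b).+1, M'; split=> //; apply: exec_while_false (stop _ InvM').
have [b_true [t1 [M1 [ex1 le1 InvM1]]]] := step i M' ltac:(lia) InvM'.
have [t2 [M2 [ex2 le2 InvM2]]] := IH i.+1 M1 ltac:(lia) InvM1.
by exists (esize b + t1 + t2).+1, M2; split; [apply: exec_while_true ex2|lia|].
Qed.

Lemma upd_eq M a v : upd M a v a = v.
Proof. by rewrite /upd eqxx. Qed.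

Lemma upd_neq M a v b : b <> a -> upd M a v b = M b.
Proof. by rewrite /upd => /eqP/negbTE ->. Qed.

Lemma eval_Add M a b : eval M (EAdd a b) = eval M a + eval M b. Proof. by []. Qed.
Lemma eval_Sub M a b : eval M (ESub a b) = eval M a - eval M b. Proof. by []. Qed.
Lemma eval_Mul M a b : eval M (EMul a b) = eval M a * eval M b. Proof. by []. Qed.
Lemma eval_Load M a : eval M (ELoad a) = M (addr (eval M a)). Proof. by []. Qed.
Lemma eval_Lt M a b : eval M (ELt a b) = if eval M a < eval M b then 1 else 0.
Proof. by []. Qed.
Lemma eval_Le M a b : eval M (ELe a b) = if eval M a <= eval M b then 1 else 0.
Proof. by []. Qed.

Definition cst (k : nat) : expr := ECst k%:R.

Lemma eval_cst M k : eval M (cst k) = k%:R. Proof. by []. Qed.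

Lemma addr_nat (k : nat) : addr k%:R = k.
Proof. by rewrite /addr -[k%:R]/((k%:Z)%:~R : rat) intrKfloor. Qed.

Lemma natr_pred (i : nat) : (0 < i)%N -> i%:R - 1 = i.-1%:R :> rat.
Proof. by move=> i_gt0; rewrite -{1}(prednK i_gt0) -addn1 natrD addrK. Qed.

(* Memory layout: cells 0 and 1 hold n and m, cells 2 .. m+1 the scores and m+2 .. m+n+1 the
   output k. From reg_base = n+m+2 on come five registers: [reg 0] the row i of the table,
   [reg 1] its column t, [reg 2] the candidate split u, [reg 3] and [reg 4] the best value and
   split found so far; then P(0), ..., P(m); then the table of V(i, t) and, shifted by
   (n+1)(m+1), the table of maximizing splits, both row by row with rows of length m+1. *)
Definition n_e : expr := ELoad (cst 0).
Definition m_e : expr := ELoad (cst 1).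
Definition reg_base_e : expr := EAdd (EAdd n_e m_e) (cst 2).
Definition reg_addr j : expr := EAdd reg_base_e (cst j).
Definition reg j : expr := ELoad (reg_addr j).
Definition prefix_addr e : expr := EAdd reg_base_e (EAdd (cst 5) e).
Definition value_addr ei et : expr :=
  EAdd reg_base_e (EAdd (cst 6) (EAdd m_e (EAdd (EMul ei (EAdd m_e (cst 1))) et))).
Definition arg_addr ei et : expr :=
  EAdd (value_addr ei et) (EMul (EAdd n_e (cst 1)) (EAdd m_e (cst 1))).
Definition out_addr e : expr := EAdd (EAdd m_e (cst 2)) e.

Definition set j e : cmd := CStore (reg_addr j) e.
Definition incr j : cmd := set j (EAdd (reg j) (cst 1)).

Definition prefix_body : cmd :=
  CSeq (CStore (prefix_addr (reg 1))
          (EAdd (ELoad (prefix_addr (ESub (reg 1) (cst 1)))) (ELoad (EAdd (cst 1) (reg 1)))))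
       (incr 1).

Definition prefix_cmd : cmd :=
  CSeq (CStore (prefix_addr (cst 0)) (cst 0))
  (CSeq (set 1 (cst 1)) (CWhile (ELe (reg 1) m_e) prefix_body)).

Definition first_row_body : cmd :=
  CSeq (CStore (value_addr (cst 1) (reg 1)) (ELoad (prefix_addr (reg 1)))) (incr 1).

Definition first_row_cmd : cmd :=
  CSeq (set 1 (cst 0)) (CWhile (ELe (reg 1) m_e) first_row_body).

Definition candidate (fe : expr -> expr -> expr) u : expr :=
  fe (ELoad (value_addr (ESub (reg 0) (cst 1)) u))
     (ESub (ELoad (prefix_addr (reg 1))) (ELoad (prefix_addr u))).

Definition update_best_cmd fe : cmd :=
  CIf (ELt (reg 3) (candidate fe (reg 2)))
      (CSeq (set 3 (candidate fe (reg 2))) (set 4 (reg 2))) CSkip.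

Definition scan_cmd fe : cmd :=
  CWhile (ELe (reg 2) (reg 1)) (CSeq (update_best_cmd fe) (incr 2)).

Definition scan_init_cmd fe : cmd :=
  CSeq (set 3 (candidate fe (cst 0))) (CSeq (set 4 (cst 0)) (set 2 (cst 1))).

Definition store_cell_cmd : cmd :=
  CSeq (CStore (value_addr (reg 0) (reg 1)) (reg 3))
  (CSeq (CStore (arg_addr (reg 0) (reg 1)) (reg 4)) (incr 1)).

Definition cell_cmd fe : cmd := CSeq (scan_init_cmd fe) (CSeq (scan_cmd fe) store_cell_cmd).

Definition row_cmd fe : cmd := CSeq (set 1 (cst 0)) (CWhile (ELe (reg 1) m_e) (cell_cmd fe)).

Definition table_body fe : cmd := CSeq (row_cmd fe) (incr 0).

Definition table_cmd fe : cmd := CSeq (set 0 (cst 2)) (CWhile (ELe (reg 0) n_e) (table_body fe)).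

Definition backtrack_step_cmd : cmd :=
  CSeq (CStore (out_addr (ESub (reg 0) (cst 1)))
               (ESub (reg 1) (ELoad (arg_addr (reg 0) (reg 1)))))
  (CSeq (set 1 (ELoad (arg_addr (reg 0) (reg 1))))
        (set 0 (ESub (reg 0) (cst 1)))).

Definition backtrack_cmd : cmd :=
  CSeq (set 1 m_e)
  (CSeq (set 0 n_e)
  (CSeq (CWhile (ELt (cst 1) (reg 0)) backtrack_step_cmd)
        (CStore (out_addr (cst 0)) (reg 1)))).

(* For m = 0 the output cells already hold the only valid split, and the time bound
   C (n m^2 + 1) leaves no room for a loop over the agents. *)
Definition opt_prog fe : cmd :=
  CIf (ELt (cst 0) m_e)
      (CSeq prefix_cmd (CSeq first_row_cmd (CSeq (table_cmd fe) backtrack_cmd)))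
      CSkip.

(* Bounds one iteration of the innermost loop, whose cost depends on the expression fe. *)
Definition step_cost fe : nat :=
  (esize (candidate fe (reg 2)) + esize (candidate fe (cst 0)) + 200)%N.

Lemma step_cost_ge fe : (200 <= step_cost fe)%N.
Proof. by rewrite /step_cost; lia. Qed.

Section Correctness.
Variables (n m : nat) (s : seq rat).

Definition reg_base : nat := (n + m + 2)%N.
Definition reg_cell j : nat := (reg_base + j)%N.
Definition prefix_cell t : nat := (reg_base + (5 + t))%N.
Definition value_cell i t : nat := (reg_base + (6 + (m + (i * m.+1 + t))))%N.
Definition arg_cell i t : nat := (value_cell i t + n.+1 * m.+1)%N.
Definition out_cell j : nat := (m.+2 + j)%N.

Ltac addr_lia :=
  unfold arg_cell, value_cell, reg_cell, prefix_cell, out_cell, reg_base in *; lia.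

Definition header (M : Defs.mem) : Prop := M 0%N = n%:R /\ M 1%N = m%:R.

Lemma header_upd M a v : (m.+2 <= a)%N -> header M -> header (upd M a v).
Proof. by move=> le_a [cell0 cell1]; split; rewrite upd_neq //; lia. Qed.

Section Addresses.
Variables (M : Defs.mem) (hM : header M).

Lemma eval_n_e : eval M n_e = n%:R. Proof. by case: hM. Qed.
Lemma eval_m_e : eval M m_e = m%:R. Proof. by case: hM. Qed.

Lemma eval_base_e : eval M reg_base_e = reg_base%:R.
Proof. by rewrite /reg_base_e !eval_Add eval_n_e eval_m_e eval_cst -!natrD. Qed.

Lemma eval_var_addr j : eval M (reg_addr j) = (reg_cell j)%:R.
Proof. by rewrite /reg_addr eval_Add eval_base_e eval_cst -natrD. Qed.

Lemma eval_reg j : eval M (reg j) = M (reg_cell j).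
Proof. by rewrite /reg eval_Load eval_var_addr addr_nat. Qed.

Lemma eval_prefix_addr e t : eval M e = t%:R -> eval M (prefix_addr e) = (prefix_cell t)%:R.
Proof. by move=> et; rewrite /prefix_addr eval_Add eval_base_e eval_Add eval_cst et -!natrD. Qed.

Lemma eval_value_addr ei et i t : eval M ei = i%:R -> eval M et = t%:R ->
  eval M (value_addr ei et) = (value_cell i t)%:R.
Proof.
move=> ei_i et_t; rewrite /value_addr eval_Add eval_base_e !eval_Add eval_Mul eval_Add eval_m_e.
by rewrite !eval_cst ei_i et_t -!natrD -natrM -!natrD addn1.
Qed.

Lemma eval_arg_addr ei et i t : eval M ei = i%:R -> eval M et = t%:R ->
  eval M (arg_addr ei et) = (arg_cell i t)%:R.
Proof.
move=> ei_i et_t; rewrite /arg_addr eval_Add (eval_value_addr ei_i et_t) eval_Mul.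
by rewrite !eval_Add eval_n_e eval_m_e eval_cst -!natrD -natrM -!natrD !addn1.
Qed.

Lemma eval_out_addr e j : eval M e = j%:R -> eval M (out_addr e) = (out_cell j)%:R.
Proof. by move=> ej; rewrite /out_addr !eval_Add eval_m_e eval_cst ej -!natrD addn2. Qed.
End Addresses.

Lemma runs_set_seq j e c M Q T : header M ->
  runs c (upd M (reg_cell j) (eval M e)) Q T ->
  runs (CSeq (set j e) c) M Q ((esize (reg_addr j) + esize e).+1 + T).
Proof. by move=> hM r; apply: runs_store_seq; rewrite eval_var_addr // addr_nat. Qed.

Lemma runs_set j e M (Q : Defs.mem -> Prop) : header M ->
  Q (upd M (reg_cell j) (eval M e)) -> runs (set j e) M Q (esize (reg_addr j) + esize e).+1.
Proof. by move=> hM QM; apply: runs_store; rewrite eval_var_addr // addr_nat. Qed.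

Lemma value_cell_inj i t i' t' : (t <= m)%N -> (t' <= m)%N ->
  value_cell i t = value_cell i' t' -> i = i' /\ t = t'.
Proof.
move=> le_t le_t' /eqP; rewrite /value_cell !eqn_add2l => /eqP eq_it.
have div_eq j u : (u <= m)%N -> ((j * m.+1 + u) %/ m.+1)%N = j.
  by move=> le_u; rewrite divnMDl // divn_small ?addn0.
have ii' : i = i' by rewrite -(div_eq i t) // eq_it div_eq.
by subst i'; split=> //; lia.
Qed.

Lemma arg_cell_inj i t i' t' : (t <= m)%N -> (t' <= m)%N ->
  arg_cell i t = arg_cell i' t' -> i = i' /\ t = t'.
Proof. by move=> le_t le_t' /eqP; rewrite /arg_cell eqn_add2r => /eqP; apply: value_cell_inj. Qed.

Lemma arg_cell_neq_value_cell i t i' t' : (i' <= n)%N -> (t' <= m)%N ->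
  arg_cell i t <> value_cell i' t'.
Proof.
move=> le_i' le_t'; have : (i' * m.+1 + t' < n.+1 * m.+1)%N.
  apply: (@leq_trans (i'.+1 * m.+1)); first by rewrite mulSn; lia.
  by rewrite leq_mul2r ltnS le_i' orbT.
addr_lia.
Qed.

Local Notation P := (prefix_score m s).

Definition scores_stored (M : Defs.mem) : Prop :=
  forall j, (j < m)%N -> M (2 + j)%N = s`_j.

Definition prefix_inv i (M : Defs.mem) : Prop :=
  [/\ header M, scores_stored M, M (reg_cell 1) = i.+1%:R &
      forall t, (t <= i)%N -> M (prefix_cell t) = P t].

Lemma scores_stored_upd M a v : (m.+2 <= a)%N -> scores_stored M -> scores_stored (upd M a v).
Proof. by move=> le_a sM j lt_j; rewrite upd_neq ?sM //; lia. Qed.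

Lemma prefix_step i M : (i < m)%N -> prefix_inv i M ->
  eval M (ELe (reg 1) m_e) != 0 /\ runs prefix_body M (prefix_inv i.+1) 100.
Proof.
move=> lt_i_m [hM sM reg1_eq pM]; have e1 : eval M (reg 1) = i.+1%:R by rewrite eval_reg.
split; first by rewrite eval_Le e1 eval_m_e // ler_nat lt_i_m oner_eq0.
apply: runs_le; first apply: runs_store_seq.
  rewrite (eval_prefix_addr hM e1) addr_nat; set M' := upd M _ _.
  have hM' : header M' by apply: header_upd hM; addr_lia.
  apply: runs_set => //; split.
  - by apply: header_upd hM'; addr_lia.
  - by apply: scores_stored_upd; [addr_lia | apply: scores_stored_upd sM; addr_lia].
  - rewrite upd_eq eval_Add eval_reg // /M' upd_neq ?reg1_eq; last addr_lia.
    by rewrite eval_cst -natrD addn1.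
  move=> t le_t; rewrite upd_neq; last addr_lia.
  case: (ltngtP t i.+1) le_t => // [lt_t _|-> _].
    by rewrite /M' upd_neq ?pM //; addr_lia.
  have ei : eval M (ESub (reg 1) (cst 1)) = i%:R by rewrite eval_Sub e1 eval_cst natr_pred.
  rewrite /M' upd_eq eval_Add !eval_Load (eval_prefix_addr hM ei) eval_Add eval_cst e1 -natrD.
  by rewrite !addr_nat pM // prefix_scoreS // add1n -add2n sM.
by [].
Qed.

Lemma prefix_cmd_runs M : header M -> scores_stored M ->
  runs prefix_cmd M (prefix_inv m) (200 * m.+1).
Proof.
move=> hM sM; apply: runs_le; first apply: runs_store_seq.
  rewrite (eval_prefix_addr hM (eval_cst _ _)) addr_nat; set M' := upd M _ _.
  have hM' : header M' by apply: header_upd hM; addr_lia.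
  apply: runs_set_seq => //; apply: (runs_while (N := m) (T := 100)) => [i M'' lt_i|M''|].
  - exact: prefix_step.
  - by case=> hM'' _ reg1_eq _; rewrite eval_Le eval_reg // reg1_eq eval_m_e // ler_nat ltnn.
  split.
  - by apply: header_upd hM'; addr_lia.
  - by apply: scores_stored_upd; [addr_lia | apply: scores_stored_upd sM; addr_lia].
  - by rewrite upd_eq.
  - by move=> t; rewrite leqn0 => /eqP ->; rewrite upd_neq /M' ?upd_eq ?prefix_score0 //; addr_lia.
by cbn; lia.
Qed.

Variable f : rat -> rat -> rat.
Hypothesis n_gt0 : (0 < n)%N.
Local Notation V := (dp_value P f).
Local Notation A := (dp_arg P f).

Definition prefix_stored (M : Defs.mem) : Prop :=
  forall t, (t <= m)%N -> M (prefix_cell t) = P t.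

Definition table_upto (M : Defs.mem) I T : Prop :=
  forall i t, (1 <= i)%N -> (t <= m)%N ->
  (i < I)%N \/ (i = I /\ (t < T)%N) ->
  M (value_cell i t) = V i t /\ ((2 <= i)%N -> M (arg_cell i t) = (A i t)%:R).

Definition dp_state (M : Defs.mem) I T : Prop :=
  [/\ header M, prefix_stored M & table_upto M I T].

Lemma dp_state_upd M I T a v : (m.+2 <= a < prefix_cell 0)%N ->
  dp_state M I T -> dp_state (upd M a v) I T.
Proof.
move=> /andP[a_lo a_hi] [hM pM tM]; split; first exact: header_upd.
  by move=> t le_t; rewrite upd_neq ?pM //; addr_lia.
move=> i t le1i le_t lex; have [vM aM] := tM i t le1i le_t lex.
by rewrite !upd_neq ?vM; [split=> // /aM | addr_lia | addr_lia].
Qed.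

Lemma dp_state_upd_reg M I T j v : (j < 5)%N ->
  dp_state M I T -> dp_state (upd M (reg_cell j) v) I T.
Proof. by move=> lt_j; apply: dp_state_upd; apply/andP; split; addr_lia. Qed.

Lemma table_upto_cell M M' I T : (1 <= I <= n)%N -> (T <= m)%N -> table_upto M I T ->
  M' (value_cell I T) = V I T -> ((2 <= I)%N -> M' (arg_cell I T) = (A I T)%:R) ->
  (forall b, b <> value_cell I T -> b <> arg_cell I T -> M' b = M b) -> table_upto M' I T.+1.
Proof.
move=> /andP[le1I leIn] le_T tM vM' aM' frame i t le1i le_t lex.
have [[-> ->] // | ne_it] := eqVneq (i, t) (I, T).
have lex' : (i < I)%N \/ i = I /\ (t < T)%N.
  case: lex => [|[eiI lt_t]]; [by left | right; split => //].
  by rewrite ltnS leq_eqVlt in lt_t; case/orP: lt_t => // /eqP etT; rewrite eiI etT eqxx in ne_it.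
have le_iI : (i <= I)%N by case: lex' => [/ltnW | [->]].
have [vM aM] := tM i t le1i le_t lex'.
have ne_v : value_cell i t <> value_cell I T.
  by move/(value_cell_inj le_t le_T) => [ei et]; rewrite ei et eqxx in ne_it.
have ne_a : arg_cell i t <> arg_cell I T.
  by move/(arg_cell_inj le_t le_T) => [ei et]; rewrite ei et eqxx in ne_it.
split; first by rewrite frame ?vM //; apply/nesym/arg_cell_neq_value_cell => //; lia.
by move=> le2i; rewrite frame ?aM //; apply: arg_cell_neq_value_cell.
Qed.

Lemma table_upto_row M I : table_upto M I m.+1 -> table_upto M I.+1 0.
Proof.
move=> tM i t le1i le_t [|[] //]; rewrite ltnS leq_eqVlt => /orP[/eqP eiI|lt_iI].
  by subst i; apply: tM le1i le_t (or_intror (conj erefl le_t)).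
exact: tM le1i le_t (or_introl lt_iI).
Qed.

Definition first_row_inv t (M : Defs.mem) : Prop :=
  dp_state M 1 t /\ M (reg_cell 1) = t%:R.

Lemma first_row_step t M : (t < m.+1)%N -> first_row_inv t M ->
  eval M (ELe (reg 1) m_e) != 0 /\ runs first_row_body M (first_row_inv t.+1) 100.
Proof.
move=> lt_t [[hM pM tM] reg1_eq]; have e1 : eval M (reg 1) = t%:R by rewrite eval_reg.
split; first by rewrite eval_Le e1 eval_m_e // ler_nat -ltnS lt_t oner_eq0.
apply: runs_le; first apply: runs_store_seq.
  rewrite (eval_value_addr hM (eval_cst _ _) e1) addr_nat; set M' := upd M _ _.
  have sM' : dp_state M' 1 t.+1.
    split; first by apply: header_upd hM; addr_lia.
      by move=> u le_u; rewrite /M' upd_neq ?pM //; addr_lia.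
    apply: (table_upto_cell (M := M)) tM _ _ _ => //.
    - by rewrite /M' upd_eq eval_Load (eval_prefix_addr hM e1) addr_nat pM.
    - by move=> b ne_b _; rewrite /M' upd_neq.
  apply: runs_set; first by case: sM'.
  split; first exact: dp_state_upd_reg.
  rewrite upd_eq eval_Add eval_reg ?eval_cst; last by case: sM'.
  by rewrite /M' upd_neq ?reg1_eq -?natrD ?addn1 //; addr_lia.
by [].
Qed.

Lemma first_row_cmd_runs M : header M -> prefix_stored M ->
  runs first_row_cmd M (first_row_inv m.+1) (200 * m.+1).
Proof.
move=> hM pM; apply: runs_le; first apply: runs_set_seq => //.
  apply: (runs_while (N := m.+1) (T := 100)) => [t M' lt_t|M' [[hM' _ _] reg1_eq]|].
  - exact: first_row_step.
  - by rewrite eval_Le eval_reg // reg1_eq eval_m_e // ler_nat ltnn.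
  split; last by rewrite upd_eq.
  by apply: dp_state_upd_reg => //; split=> // i t le1i _ [|[]] //; lia.
by cbn; lia.
Qed.

Definition regs (M : Defs.mem) : seq rat := [seq M (reg_cell j) | j <- iota 0 5].

Lemma regs_upd M j v : (j < 5)%N -> regs (upd M (reg_cell j) v) = set_nth 0 (regs M) j v.
Proof.
move=> lt_j; apply: (@eq_from_nth _ 0) => [|i].
  by rewrite size_set_nth !size_map size_iota; apply/esym/maxn_idPr.
rewrite size_map size_iota => lt_i; rewrite nth_set_nth /= !(nth_map 0%N) ?size_iota //.
by rewrite nth_iota // /upd /reg_cell eqn_add2l.
Qed.

Lemma eval_reg_nth M r j : header M -> regs M = r -> (j < 5)%N -> eval M (reg j) = nth 0 r j.
Proof. by move=> hM <- lt_j; rewrite eval_reg // (nth_map 0%N) ?size_iota // nth_iota. Qed.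

Lemma regs_set M I T r j v : (j < 5)%N -> dp_state M I T -> regs M = r ->
  dp_state (upd M (reg_cell j) v) I T /\ regs (upd M (reg_cell j) v) = set_nth 0 r j v.
Proof. by move=> lt_j sM <-; split; [apply: dp_state_upd_reg | apply: regs_upd]. Qed.

Variable fe : expr -> expr -> expr.
Hypothesis eval_fe : forall M a b, eval M (fe a b) = f (eval M a) (eval M b).

Local Notation K := (step_cost fe).

Lemma eval_candidate M I T r ue u : (2 <= I)%N -> (u <= T <= m)%N ->
  dp_state M I T -> regs M = [:: I%:R, T%:R & r] -> eval M ue = u%:R ->
  eval M (candidate fe ue) = f (V I.-1 u) (P T - P u).
Proof.
move=> le2I /andP[le_uT le_Tm] [hM pM tM] rM eu.
have ei : eval M (ESub (reg 0) (cst 1)) = I.-1%:R.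
  by rewrite eval_Sub (eval_reg_nth hM rM) // eval_cst natr_pred //; lia.
have et : eval M (reg 1) = T%:R by rewrite (eval_reg_nth hM rM).
rewrite /candidate eval_fe eval_Sub !eval_Load (eval_value_addr hM ei eu).
rewrite (eval_prefix_addr hM et) (eval_prefix_addr hM eu) !addr_nat.
rewrite (pM T) // (pM u); last lia.
have [le1 le_um lt_I] : [/\ (1 <= I.-1)%N, (u <= m)%N & (I.-1 < I)%N] by split; lia.
by have [-> _] := tM _ _ le1 le_um (or_introl lt_I).
Qed.

Definition scan_acc I T g : rat * nat :=
  foldl (best_step P f (V I.-1) T) (f (V I.-1 0%N) (P T - P 0%N), 0%N) (iota 1 g).

Lemma scan_accS I T g : scan_acc I T g.+1 = best_step P f (V I.-1) T (scan_acc I T g) g.+1.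
Proof. by rewrite /scan_acc -[g.+1]addn1 iotaD foldl_cat add1n addn1. Qed.

Definition scan_regs I T u (acc : rat * nat) (M : Defs.mem) : Prop :=
  dp_state M I T /\ regs M = [:: I%:R; T%:R; u%:R; acc.1; acc.2%:R].

Lemma update_best_runs I T g M : (2 <= I)%N -> (g < T <= m)%N ->
  scan_regs I T g.+1 (scan_acc I T g) M ->
  runs (update_best_cmd fe) M (scan_regs I T g.+1 (scan_acc I T g.+1)) (2 * K).
Proof.
move=> le2I /andP[lt_gT le_Tm] [sM rM]; have hM : header M by case: sM.
rewrite scan_accS /best_step; set acc := scan_acc I T g; set v := f _ _.
have ec : eval M (candidate fe (reg 2)) = v.
  by apply: (eval_candidate le2I _ sM rM); [apply/andP | rewrite (eval_reg_nth hM rM)].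
case: ifP => [lt_acc_v | ge_acc_v].
  apply: runs_le; first apply: runs_if_true.
  - by rewrite eval_Lt (eval_reg_nth hM rM) //= ec lt_acc_v oner_eq0.
  - apply: runs_set_seq => //; rewrite ec.
    have [sM1 rM1] := regs_set (j := 3) v isT sM rM; have [hM1 _ _] := sM1.
    apply: runs_set => //; rewrite (eval_reg_nth hM1 rM1) //.
    exact: (regs_set (j := 4) _ isT sM1 rM1).
  by cbn; rewrite /step_cost; lia.
apply: runs_le; first apply: runs_if_false.
- by rewrite eval_Lt (eval_reg_nth hM rM) //= ec ge_acc_v.
- exact: runs_skip.
by cbn; rewrite /step_cost; lia.
Qed.

Definition scan_inv I T g : Defs.mem -> Prop := scan_regs I T g.+1 (scan_acc I T g).

Lemma scan_step I T g M : (2 <= I)%N -> (g < T <= m)%N -> scan_inv I T g M ->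
  eval M (ELe (reg 2) (reg 1)) != 0 /\
  runs (CSeq (update_best_cmd fe) (incr 2)) M (scan_inv I T g.+1) (3 * K).
Proof.
move=> le2I /andP[lt_gT le_Tm] sM; have [[hM _ _] rM] := sM.
split; first by rewrite eval_Le !(eval_reg_nth hM rM) //= ler_nat lt_gT oner_eq0.
apply: runs_le; first apply: runs_seq (update_best_runs le2I _ sM) _ => [|M1 [sM1 rM1]].
- exact/andP.
- have [hM1 _ _] := sM1; apply: runs_set => //.
  rewrite eval_Add (eval_reg_nth hM1 rM1) // eval_cst -natrD addn1.
  exact: (regs_set (j := 2) _ isT sM1 rM1).
by cbn; rewrite /step_cost; lia.
Qed.

Lemma scan_cmd_runs I T M : (2 <= I)%N -> (T <= m)%N -> scan_inv I T 0 M ->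
  runs (scan_cmd fe) M (scan_inv I T T) (4 * K * m.+1).
Proof.
move=> le2I le_Tm sM; apply: runs_le.
  apply: (runs_while (N := T) (T := 3 * K)) sM => [g M' lt_gT|M' [[hM' _ _] rM']].
  - by apply: scan_step => //; apply/andP.
  - by rewrite eval_Le !(eval_reg_nth hM' rM') //= ler_nat ltnn.
have := leq_mul le_Tm (leqnn (3 * K + 100)); cbn; rewrite /step_cost; nia.
Qed.

Lemma size_regs M : size (regs M) = 5.
Proof. by rewrite size_map size_iota. Qed.

Lemma regs_upd_other M a v : (a < reg_cell 0)%N || (prefix_cell 0 <= a)%N ->
  regs (upd M a v) = regs M.
Proof.
move=> /orP a_out; apply/eq_in_map => j; rewrite mem_iota => /andP[_ lt_j].
by rewrite upd_neq //; case: a_out; addr_lia.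
Qed.

Definition row_inv I t (M : Defs.mem) : Prop :=
  dp_state M I t /\ exists r, regs M = [:: I%:R, t%:R & r].

Lemma scan_init_runs I T M : (2 <= I)%N -> (T <= m)%N -> row_inv I T M ->
  runs (scan_init_cmd fe) M (scan_inv I T 0) (2 * K).
Proof.
move=> le2I le_Tm [sM [r rM]]; have [hM _ _] := sM.
have [a [b [c er]]] : exists a b c, r = [:: a; b; c].
  by have := size_regs M; rewrite rM; case: r {rM} => [|a [|b [|c []]]] // _; exists a, b, c.
subst r; have ec : eval M (candidate fe (cst 0)) = f (V I.-1 0) (P T - P 0).
  exact: (eval_candidate le2I _ sM rM).
apply: runs_le; first (apply: runs_set_seq => //; rewrite ec).
  have [sM1 rM1] := regs_set (j := 3) (f (V I.-1 0) (P T - P 0)) isT sM rM.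
  have [hM1 _ _] := sM1; apply: runs_set_seq => //; rewrite eval_cst.
  have [sM2 rM2] := regs_set (j := 4) 0%:R isT sM1 rM1; have [hM2 _ _] := sM2.
  by apply: runs_set => //; rewrite eval_cst; apply: (regs_set (j := 2) _ isT sM2 rM2).
by cbn; rewrite /step_cost; lia.
Qed.

Lemma store_cell_runs I t M : (2 <= I <= n)%N -> (t <= m)%N -> scan_inv I t t M ->
  runs store_cell_cmd M (row_inv I t.+1) 200.
Proof.
move=> /andP[le2I le_In] le_tm [[hM pM tM] rM].
have ei : eval M (reg 0) = I%:R by rewrite (eval_reg_nth hM rM).
have et : eval M (reg 1) = t%:R by rewrite (eval_reg_nth hM rM).
apply: runs_le; first apply: runs_store_seq.
  rewrite (eval_value_addr hM ei et) addr_nat (eval_reg_nth hM rM) //=.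
  set M1 := upd M (value_cell I t) _.
  have hM1 : header M1 by apply: header_upd hM; addr_lia.
  have rM1 : regs M1 = regs M by apply: regs_upd_other; apply/orP; right; addr_lia.
  rewrite -{}rM1 in rM.
  have ei1 : eval M1 (reg 0) = I%:R by rewrite (eval_reg_nth hM1 rM).
  have et1 : eval M1 (reg 1) = t%:R by rewrite (eval_reg_nth hM1 rM).
  apply: runs_store_seq; rewrite (eval_arg_addr hM1 ei1 et1) addr_nat.
  rewrite (eval_reg_nth hM1 rM) //=; set M2 := upd M1 (arg_cell I t) _.
  have sM2 : dp_state M2 I t.+1.
    split; first by apply: header_upd hM1; addr_lia.
      by move=> u le_u; rewrite /M2 /M1 !upd_neq ?pM //; addr_lia.
    apply: (table_upto_cell (M := M)) tM _ _ _ => //; first by apply/andP; split; lia.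
    - rewrite /M2 upd_neq; last by apply/nesym/arg_cell_neq_value_cell.
      by rewrite /M1 upd_eq dp_value_best.
    - by rewrite /M2 upd_eq.
    - by move=> b ne_v ne_a; rewrite /M2 /M1 !upd_neq.
  have rM2 : regs M2 = regs M1 by apply: regs_upd_other; apply/orP; right; addr_lia.
  rewrite -{}rM2 in rM; have [hM2 _ _] := sM2.
  apply: runs_set => //; split; first exact: dp_state_upd_reg.
  rewrite regs_upd // rM eval_Add (eval_reg_nth hM2 rM) // eval_cst -natrD addn1.
  by eexists.
by cbn; lia.
Qed.

Lemma cell_step I t M : (2 <= I <= n)%N -> (t < m.+1)%N -> row_inv I t M ->
  eval M (ELe (reg 1) m_e) != 0 /\ runs (cell_cmd fe) M (row_inv I t.+1) (7 * K * m.+1).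
Proof.
move=> le_In lt_tm sM; have [[hM _ _] [r rM]] := sM.
have [le2I le_tm] : (2 <= I)%N /\ (t <= m)%N by split; lia.
split; first by rewrite eval_Le (eval_reg_nth hM rM) // eval_m_e // ler_nat le_tm oner_eq0.
apply: runs_le.
  apply: runs_seq (scan_init_runs le2I le_tm sM) _ => M1 sM1.
  apply: runs_seq (scan_cmd_runs le2I le_tm sM1) _ => M2 sM2.
  exact: store_cell_runs.
have := step_cost_ge fe; nia.
Qed.

Lemma row_cmd_runs I M r : (2 <= I <= n)%N -> dp_state M I 0 -> regs M = I%:R :: r ->
  runs (row_cmd fe) M (row_inv I m.+1) (8 * K * m.+1 ^ 2).
Proof.
move=> le_In sM rM; have [hM _ _] := sM.
apply: runs_le; first apply: runs_set_seq => //.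
  apply: (runs_while (N := m.+1) (T := 7 * K * m.+1)) => [t M' lt_tm|M' [[hM' _ _] [r' rM']]|].
  - exact: cell_step.
  - by rewrite eval_Le (eval_reg_nth hM' rM') // eval_m_e // ler_nat ltnn.
  split; first exact: dp_state_upd_reg.
  by rewrite regs_upd // rM eval_cst; case: r {rM} => [|a r]; eexists.
have := step_cost_ge fe; cbn; nia.
Qed.

Definition table_inv d (M : Defs.mem) : Prop :=
  dp_state M d.+2 0 /\ exists r, regs M = d.+2%:R :: r.

Lemma table_step d M : (d < n.-1)%N -> table_inv d M ->
  eval M (ELe (reg 0) n_e) != 0 /\ runs (table_body fe) M (table_inv d.+1) (9 * K * m.+1 ^ 2).
Proof.
move=> lt_dn [sM [r rM]]; have [hM _ _] := sM.
have le_dn : (d.+2 <= n)%N by lia.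
split; first by rewrite eval_Le (eval_reg_nth hM rM) // eval_n_e // ler_nat le_dn oner_eq0.
apply: runs_le.
  apply: runs_seq (row_cmd_runs _ sM rM) _ => [|M1 [[hM1 pM1 tM1] [r1 rM1]]]; first lia.
  apply: runs_set => //; split.
    by apply: dp_state_upd_reg => //; split=> //; apply: table_upto_row.
  by rewrite regs_upd // rM1 eval_Add (eval_reg_nth hM1 rM1) // eval_cst -natrD addn1; eexists.
have := step_cost_ge fe; cbn; nia.
Qed.

Lemma table_cmd_runs M : dp_state M 2 0 ->
  runs (table_cmd fe) M (fun M' => dp_state M' n.+1 0) (10 * K * n * m.+1 ^ 2).
Proof.
move=> sM; have [hM _ _] := sM.
apply: runs_le; first apply: runs_set_seq => //.
  apply: runs_weaken.
  - apply: (runs_while (Inv := table_inv) (N := n.-1) (T := 9 * K * m.+1 ^ 2))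
      => [d M' lt_dn|M' [[hM' _ _] [r rM]]|].
    + exact: table_step.
    + by rewrite eval_Le (eval_reg_nth hM' rM) // eval_n_e // ler_nat; case: leqP => //; lia.
    split; first exact: dp_state_upd_reg.
    by rewrite regs_upd // eval_cst; case: (regs M) => [|a r]; eexists.
  - exact: leqnn.
  by move=> M' [sM' _]; rewrite -(prednK n_gt0).
have := step_cost_ge fe; have := n_gt0; cbn; nia.
Qed.

Local Notation S := (dp_split P f).

Lemma dp_state_upd_out M I T j v : (j < n)%N ->
  dp_state M I T -> dp_state (upd M (out_cell j) v) I T.
Proof. by move=> lt_j; apply: dp_state_upd; apply/andP; split; addr_lia. Qed.

Lemma regs_upd_out M j v : (j < n)%N -> regs (upd M (out_cell j) v) = regs M.
Proof. by move=> lt_j; apply: regs_upd_other; apply/orP; left; addr_lia. Qed.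

(* After d rounds the first n - d agents share the first T items, and the quotas sfx of the
   last d agents have been written. *)
Definition backtrack_inv d (M : Defs.mem) : Prop := dp_state M n.+1 0 /\ exists T sfx r,
  [/\ regs M = [:: (n - d)%:R, T%:R & r], (T <= m)%N, size sfx = d,
      S n m = S (n - d) T ++ sfx &
      forall j, (j < d)%N -> M (out_cell (n - d + j)) = (nth 0%N sfx j)%:R].

Lemma backtrack_step d M : (d < n.-1)%N -> backtrack_inv d M ->
  eval M (ELt (cst 1) (reg 0)) != 0 /\ runs backtrack_step_cmd M (backtrack_inv d.+1) 300.
Proof.
move=> lt_dn [sM [T [sfx [r [rM le_Tm size_sfx split_eq outM]]]]]; have [hM _ tM] := sM.
set I := (n - d)%N in rM split_eq outM; have [lt1I le_In] : (1 < I)%N /\ (I <= n)%N by lia.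
have ei : eval M (reg 0) = I%:R by rewrite (eval_reg_nth hM rM).
have et : eval M (reg 1) = T%:R by rewrite (eval_reg_nth hM rM).
have ei1 : eval M (ESub (reg 0) (cst 1)) = I.-1%:R.
  by rewrite eval_Sub ei eval_cst natr_pred // ltnW.
have [_ eA] := tM I T (ltnW lt1I) le_Tm (or_introl le_In).
split; first by rewrite eval_Lt eval_cst ei ltr_nat lt1I oner_eq0.
apply: runs_le; first apply: runs_store_seq.
  rewrite (eval_out_addr hM ei1) addr_nat eval_Sub et eval_Load (eval_arg_addr hM ei et).
  rewrite addr_nat eA // -natrB ?dp_arg_le //; set M1 := upd M (out_cell I.-1) _.
  have lt_In : (I.-1 < n)%N by lia.
  have sM1 : dp_state M1 n.+1 0 by apply: dp_state_upd_out.
  have rM1 : regs M1 = [:: I%:R, T%:R & r] by rewrite regs_upd_out.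
  have [hM1 _ _] := sM1; apply: runs_set_seq => //.
  have ei' : eval M1 (reg 0) = I%:R by rewrite (eval_reg_nth hM1 rM1).
  have et' : eval M1 (reg 1) = T%:R by rewrite (eval_reg_nth hM1 rM1).
  rewrite eval_Load (eval_arg_addr hM1 ei' et').
  rewrite addr_nat /M1 upd_neq ?eA //; last addr_lia.
  have [sM2 rM2] := regs_set (j := 1) (A I T)%:R isT sM1 rM1; have [hM2 _ _] := sM2.
  apply: runs_set => //; rewrite eval_Sub (eval_reg_nth hM2 rM2) // eval_cst natr_pred; last lia.
  have [sM3 rM3] := regs_set (j := 0) I.-1%:R isT sM2 rM2.
  split=> //; exists (A I T), ((T - A I T)%N :: sfx), r.
  have -> : (n - d.+1 = I.-1)%N by rewrite /I; lia.
  split=> //; first exact: leq_trans (dp_arg_le _ _ _ _) le_Tm.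
  - by rewrite /= size_sfx.
  - by rewrite split_eq (dp_split_rcons _ _ _ lt1I) cat_rcons.
  case=> [|j] lt_j; rewrite 2?upd_neq; try addr_lia.
    by rewrite addn0 upd_eq.
  by rewrite upd_neq -?addSnnS ?(prednK (ltnW lt1I)) ?outM //; addr_lia.
by [].
Qed.

Definition outputs_split (M : Defs.mem) : Prop :=
  forall j, (j < n)%N -> M (out_cell j) = (nth 0%N (S n m) j)%:R.

Lemma backtrack_cmd_runs M : dp_state M n.+1 0 -> runs backtrack_cmd M outputs_split (400 * n).
Proof.
move=> sM; have [hM _ _] := sM.
apply: runs_le; first (apply: runs_set_seq => //; rewrite eval_m_e //).
  have [sM1 rM1] := regs_set (j := 1) m%:R isT sM erefl; have [hM1 _ _] := sM1.
  apply: runs_set_seq => //; rewrite eval_n_e //.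
  have [sM2 rM2] := regs_set (j := 0) n%:R isT sM1 rM1; have [hM2 _ _] := sM2.
  apply: runs_seq (runs_while (Inv := backtrack_inv) (N := n.-1) (T := 300) _ _ _) _.
  - by move=> d M' lt_dn; apply: backtrack_step.
  - move=> M' [[hM' _ _] [T [sfx [r [rM' _ _ _ _]]]]].
    by rewrite eval_Lt eval_cst (eval_reg_nth hM' rM') // (_ : n - n.-1 = 1)%N ?ltxx //; lia.
  - split=> //; exists m, [::], (drop 2 (regs M)); rewrite subn0 cats0 rM2.
    by split=> //; have := size_regs M; case: (regs M) => [|a [|b r]].
  move=> M3 [[hM3 _ _] [T [sfx [r [rM3 _ _ split_eq outM]]]]].
  rewrite (_ : n - n.-1 = 1)%N in rM3 split_eq outM; last lia.
  apply: runs_store; rewrite (eval_out_addr hM3 (eval_cst _ _)) addr_nat (eval_reg_nth hM3 rM3) //.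
  move=> [|j] lt_jn; rewrite split_eq; first by rewrite upd_eq.
  by rewrite upd_neq ?outM //=; addr_lia.
by have := n_gt0; cbn; nia.
Qed.

Hypothesis m_gt0 : (0 < m)%N.

Lemma opt_prog_runs :
  runs (opt_prog fe) (input_mem n m s) outputs_split (100 * K * (n * m ^ 2 + 1)).
Proof.
have hM : header (input_mem n m s) by [].
have sM : scores_stored (input_mem n m s).
  by move=> j lt_jm; rewrite /input_mem /= ifT ?addKn //; lia.
apply: runs_le.
  apply: runs_if_true; first by rewrite eval_Lt eval_cst eval_m_e // ltr_nat m_gt0 oner_eq0.
  apply: runs_seq (prefix_cmd_runs hM sM) _ => M1 [hM1 _ _ pM1].
  apply: runs_seq (first_row_cmd_runs hM1 pM1) _ => M2 [[hM2 pM2 tM2] _].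
  have sM2 : dp_state M2 2 0 by split=> //; apply: table_upto_row.
  apply: runs_seq (table_cmd_runs sM2) _ => M3 sM3.
  exact: backtrack_cmd_runs.
have := step_cost_ge fe; have := n_gt0; have := m_gt0; cbn; nia.
Qed.
End Correctness.

(** * Optimality of the computed split *)

Section Optimality.
Variables (f : rat -> rat -> rat) (agg : seq rat -> rat).
Hypothesis f_monol : forall x x' y, 0 <= y -> x <= x' -> f x y <= f x' y.
Hypothesis agg1 : forall y, agg [:: y] = y.
Hypothesis agg_rcons : forall L y, L != [::] -> agg (rcons L y) = f (agg L) y.

Variables (n m : nat) (s : seq rat).
Hypothesis n_gt0 : (0 < n)%N.
Hypothesis s_ge0 : forall j, 0 <= s`_j.
Local Notation P := (prefix_score m s).

Definition welfare (k : 'I_n -> nat) : rat := agg [seq EU_FC m s k j | j <- enum 'I_n].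

Lemma sum_agents (k : 'I_n -> nat) : (\sum_(i < n) k i)%N = sumn [seq k j | j <- enum 'I_n].
Proof. by rewrite sumnE big_map big_enum. Qed.

Lemma welfare_le_dp_value k : (\sum_(i < n) k i)%N = m -> welfare k <= dp_value P f n m.
Proof.
move=> sum_k; set ks := [seq k j | j <- enum 'I_n].
have size_ks : size ks = n by rewrite size_map size_enum_ord.
have sumn_ks : sumn ks = m by rewrite -sum_k sum_agents.
rewrite /welfare EU_FC_block_values -/ks.
rewrite -[n in dp_value _ _ n]size_ks -[m in dp_value _ _ _ m]sumn_ks.
apply: agg_block_values_le_dp_value => //; first exact: prefix_score0.
  exact: prefix_score_mono.
by rewrite -size_eq0 size_ks -lt0n.
Qed.

Definition dp_alloc (i : 'I_n) : nat := nth 0%N (dp_split P f n m) i.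

Lemma dp_alloc_seq : [seq dp_alloc j | j <- enum 'I_n] = dp_split P f n m.
Proof.
have [size_S _ _] := dp_splitP (prefix_score0 m s) agg1 agg_rcons m n_gt0.
by rewrite -[RHS](mkseq_nth 0%N) size_S /mkseq -val_enum_ord -map_comp.
Qed.

Lemma sum_dp_alloc : (\sum_(i < n) dp_alloc i)%N = m.
Proof.
have [_ sum_S _] := dp_splitP (prefix_score0 m s) agg1 agg_rcons m n_gt0.
by rewrite sum_agents dp_alloc_seq.
Qed.

Lemma dp_alloc_opt k : (\sum_(i < n) k i)%N = m -> welfare k <= welfare dp_alloc.
Proof.
have [_ _ agg_S] := dp_splitP (prefix_score0 m s) agg1 agg_rcons m n_gt0.
move=> sum_k; rewrite [welfare dp_alloc]/welfare EU_FC_block_values dp_alloc_seq agg_S.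
exact: welfare_le_dp_value.
Qed.
End Optimality.

Lemma opt_prog_computes (f : rat -> rat -> rat) (fe : expr -> expr -> expr)
    (agg : seq rat -> rat) (SW : forall n m : nat, seq rat -> ('I_n -> nat) -> rat) :
  (forall M a b, eval M (fe a b) = f (eval M a) (eval M b)) ->
  (forall x x' y, 0 <= y -> x <= x' -> f x y <= f x' y) ->
  (forall y, agg [:: y] = y) ->
  (forall L y, L != [::] -> agg (rcons L y) = f (agg L) y) ->
  (forall n m s k, SW n m s k = welfare agg m s k) ->
  computes_opt_in_O_nm2 SW (opt_prog fe).
Proof.
move=> eval_fe f_monol agg1 agg_rcons SW_agg.
exists (100 * step_cost fe)%N => n m s n_gt0 [_ [_ /allP s_ge0']].
have s_ge0 j : 0 <= s`_j.
  by case: (ltnP j (size s)) => [lt_j|ge_j]; [apply/s_ge0'/mem_nth | rewrite nth_default].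
have [m0|m_gt0] := posnP m; last first.
  have [t [M' [ex le_t outM]]] := opt_prog_runs s n_gt0 eval_fe m_gt0.
  exists t, M'; split=> //; split=> //; exists (dp_alloc f m s); split; [|split].
  - by move=> i; apply: outM.
  - exact: (sum_dp_alloc agg1 agg_rcons m s n_gt0).
  - move=> k sum_k; rewrite !SW_agg.
    exact: (dp_alloc_opt f_monol agg1 agg_rcons n_gt0 s_ge0 sum_k).
subst m; exists (esize (ELt (cst 0) m_e) + 1).+1, (input_mem n 0 s); split.
  have hM : header n 0 (input_mem n 0 s) by [].
  by apply: exec_if_false; [rewrite eval_Lt eval_cst (eval_m_e hM) ltxx | apply: exec_skip].
split; first by have := step_cost_ge fe; cbn; lia.
exists (fun=> 0%N); split=> [i|]; last split=> [|k sum_k]; rewrite ?big1 //.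
have k0 : k =1 (fun=> 0%N).
  by move=> i; apply/eqP; rewrite -leqn0 -sum_k (bigD1 i) //= leq_addr.
by rewrite !SW_agg /welfare !EU_FC_block_values (eq_map k0).
Qed.

Definition min_e (a b : expr) : expr := EAdd b (EMul (ELt a b) (ESub a b)).

Lemma eval_min_e M a b : eval M (min_e a b) = Num.min (eval M a) (eval M b).
Proof.
rewrite /min_e eval_Add eval_Mul eval_Lt eval_Sub minElt.
by case: ifP => _; rewrite ?mul1r ?mul0r ?addr0 // addrC subrK.
Qed.

Lemma seqmin_rcons (L : seq rat) y : L != [::] -> seqmin (rcons L y) = Num.min (seqmin L) y.
Proof.
case: L => [//|x L] _ /=; elim: L => [|z L IH] /=; first exact: minC.
by rewrite IH minA.
Qed.

Theorem theorem1 :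
  (exists P : cmd, computes_opt_in_O_nm2 (fun n m s k => @SWe_FC n m s k) P) /\
  (exists P : cmd, computes_opt_in_O_nm2 (fun n m s k => @SWn_FC n m s k) P).
Proof.
split; [exists (opt_prog min_e) | exists (opt_prog EMul)].
  apply: (opt_prog_computes (f := Num.min) (agg := seqmin)) => //.
  - exact: eval_min_e.
  - by move=> x x' y _ le_x; rewrite le_min !ge_min le_x lexx !orbT.
  - exact: seqmin_rcons.
apply: (opt_prog_computes (f := *%R) (agg := fun L => \prod_(x <- L) x)) => //.
- by move=> x x' y y_ge0 le_x; apply: ler_wpM2r.
- by move=> y; rewrite big_seq1.
- by move=> L y _; rewrite -cats1 big_cat big_seq1.
- by move=> n m s k; rewrite /SWn_FC /welfare big_map big_enum.
Qed.
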